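(* Let $\mathcal{X}\subseteq\mathbb{R}^N$, $\Theta\subseteq\mathbb{R}^K$, and let $p(\mathbf{x},\boldsymbol{\theta})$ be a joint p.d.f. on $\mathcal{X}\times\Theta$ with marginal $p(\mathbf{x})$, posterior $p(\boldsymbol{\theta}\mid\mathbf{x})$ and support $\mathcal{S}_{\mathcal{X}}=\{\mathbf{x}: p(\mathbf{x})>0\}$. Let $\mathbf{g}=(g_1,\dots,g_L)^{T}$ with each $g_\ell\in\mathcal{W}_2$, and let $\boldsymbol{\varphi}=(\varphi_1,\dots,\varphi_M)^{T}$ with each $\varphi_m\in\mathcal{W}_2$, the functions $\varphi_1,\dots,\varphi_M$ being linearly independent in $\mathcal{L}_2(p(\mathbf{x},\boldsymbol{\theta}))$. Let $\boldsymbol{\zeta}=(\zeta_1,\dots,\zeta_L)^{T}$ with each $\zeta_\ell\in\mathcal{W}_2$ satisfying, for a.e. $\mathbf{x}\in\mathcal{S}_{\mathcal{X}}$, $\mathrm{E}_{\boldsymbol{\theta}\mid\mathbf{x}}[\zeta_\ell(\mathbf{x},\boldsymbol{\theta})\,\boldsymbol{\varphi}(\mathbf{x},\boldsymbol{\theta})]=\mathbf{0}$. Assume that $\mathbf{Q}_{\boldsymbol{\varphi}\mid\mathbf{x}}$ is invertible for a.e. $\mathbf{x}\in\mathcal{S}_{\mathcal{X}}$. Then \[ \mathbf{Q}_{(\mathbf{g}-\boldsymbol{\zeta})}\succeq \mathrm{E}_{\mathbf{x}}\big[\mathbf{R}_{\mathbf{g}\boldsymbol{\varphi}\mid\mathbf{x}}\,\mathbf{Q}_{\boldsymbol{\varphi}\mid\mathbf{x}}^{-1}\,\mathbf{R}_{\mathbf{g}\boldsymbol{\varphi}\mid\mathbf{x}}^{T}\big]\succeq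 \mathbf{R}_{\mathbf{g}\boldsymbol{\varphi}}\,\mathbf{Q}_{\boldsymbol{\varphi}}^{-1}\,\mathbf{R}_{\mathbf{g}\boldsymbol{\varphi}}^{T}, \] where $\mathbf{A}\succeq\mathbf{B}$ means $\mathbf{A}-\mathbf{B}$ is positive semi-definite.
   Context: $\mathcal{L}_2(p(\mathbf{x},\boldsymbol{\theta}))$ is the space of real functions $\zeta(\mathbf{x},\boldsymbol{\theta})$ with $\mathrm{E}_{\mathbf{x},\boldsymbol{\theta}}[\zeta^2]<\infty$ (expectation w.r.t. the joint p.d.f.). $\mathcal{W}_2$ is the subspace of those $\zeta\in\mathcal{L}_2(p(\mathbf{x},\boldsymbol{\theta}))$ such that for a.e. $\mathbf{x}\in\mathcal{S}_{\mathcal{X}}$, $\mathrm{E}_{\boldsymbol{\theta}\mid\mathbf{x}}[\zeta(\mathbf{x},\boldsymbol{\theta})^2]<\infty$, where $\mathrm{E}_{\boldsymbol{\theta}\mid\mathbf{x}}$ denotes expectation w.r.t. $p(\boldsymbol{\theta}\mid\mathbf{x})$ and $\mathrm{E}_{\mathbf{x}}$ expectation w.r.t. $p(\mathbf{x})$. Define the matrices $\mathbf{Q}_{(\mathbf{g}-\boldsymbol{\zeta})}=\mathrm{E}_{\mathbf{x},\boldsymbol{\theta}}[(\mathbf{g}-\boldsymbol{\zeta})(\mathbf{g}-\boldsymbol{\zeta})^{T}]$ ($L\times L$), $\mathbf{R}_{\mathbf{g}\boldsymbol{\varphi}}=\mathrm{E}_{\mathbf{x},\boldsymbol{\theta}}[\mathbf{g}(\mathbf{x},\boldsymbol{\theta})\boldsymbol{\varphi}(\mathbf{x},\boldsymbol{\theta})^{T}]$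 ($L\times M$), $\mathbf{Q}_{\boldsymbol{\varphi}}=\mathrm{E}_{\mathbf{x},\boldsymbol{\theta}}[\boldsymbol{\varphi}\boldsymbol{\varphi}^{T}]$ ($M\times M$), and their posterior counterparts $\mathbf{R}_{\mathbf{g}\boldsymbol{\varphi}\mid\mathbf{x}}=\mathrm{E}_{\boldsymbol{\theta}\mid\mathbf{x}}[\mathbf{g}(\mathbf{x},\boldsymbol{\theta})\boldsymbol{\varphi}(\mathbf{x},\boldsymbol{\theta})^{T}]$ and $\mathbf{Q}_{\boldsymbol{\varphi}\mid\mathbf{x}}=\mathrm{E}_{\boldsymbol{\theta}\mid\mathbf{x}}[\boldsymbol{\varphi}(\mathbf{x},\boldsymbol{\theta})\boldsymbol{\varphi}(\mathbf{x},\boldsymbol{\theta})^{T}]$. *)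

From HB Require Import structures.
From mathcomp Require Import all_boot all_order all_algebra.
From mathcomp Require Import all_classical all_reals all_analysis.
Set Implicit Arguments.
Unset Strict Implicit.
Unset Printing Implicit Defensive.
Import Order.TTheory GRing.Theory Num.Theory.
Import numFieldNormedType.Exports.
Local Open Scope classical_set_scope.
Local Open Scope ring_scope.

(* Setting: X (observations) and Th (parameters) are measurable spaces with
   sigma-finite reference measures mu, nu (Lebesgue measure on R^N, R^K in the
   paper); p : X * Th -> R is the joint density w.r.t. the product measure
   mu \x nu. *)

Section Bayes.
Context {R : realType} {d1 d2 : measure_display}
  {X : measurableType d1} {Th : measurableType d2}.
Variables (mu : {sigma_finite_measure set X -> \bar R})
          (nu : {sigma_finite_measure set Th -> \bar R})
          (p : X * Th -> R).

Definition is_joint_pdf : Prop :=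
  [/\ measurable_fun setT p, (forall z, 0 <= p z) &
      (\int[(mu \x nu)%E]_z (p z)%:E = 1)%E].

Definition Ejoint (f : X * Th -> R) : R :=
  Rintegral (mu \x nu)%E setT (fun z => f z * p z).

Definition marg (x : X) : R := fine (\int[nu]_t (p (x, t))%:E)%E.

Definition suppX : set X := [set x | 0 < marg x].

Definition post (x : X) (t : Th) : R := p (x, t) / marg x.

Definition Epost (f : X * Th -> R) (x : X) : R :=
  Rintegral nu setT (fun t => f (x, t) * post x t).

Definition Emarg (h : X -> R) : R :=
  Rintegral mu setT (fun x => h x * marg x).

Definition inL2 (f : X * Th -> R) : Prop :=
  measurable_fun setT f /\
  (\int[(mu \x nu)%E]_z ((f z) ^+ 2 * p z)%:E < +oo)%E.

Definition inW2 (f : X * Th -> R) : Prop :=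
  inL2 f /\
  {ae mu, forall x, suppX x ->
     (\int[nu]_t ((f (x, t)) ^+ 2 * post x t)%:E < +oo)%E}.

(* linear independence in L_2(p(x,theta)): a linear combination which is the
   zero element of L_2 (i.e. vanishes p(x,theta)-almost everywhere) is trivial *)
Definition lin_indep_L2 (M : nat) (phi : 'I_M -> X * Th -> R) : Prop :=
  forall c : 'I_M -> R,
    {ae (mu \x nu)%E, forall z, p z != 0 -> \sum_(m < M) c m * phi m z = 0} ->
    forall m, c m = 0.

Definition Qmat (L : nat) (f : 'I_L -> X * Th -> R) : 'M[R]_L :=
  \matrix_(i, j) Ejoint (fun z => f i z * f j z).

Definition Rmat (L M : nat) (g : 'I_L -> X * Th -> R) (phi : 'I_M -> X * Th -> R)
  : 'M[R]_(L, M) := \matrix_(i, j) Ejoint (fun z => g i z * phi j z).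

Definition Qpost (M : nat) (phi : 'I_M -> X * Th -> R) (x : X) : 'M[R]_M :=
  \matrix_(i, j) Epost (fun z => phi i z * phi j z) x.

Definition Rpost (L M : nat) (g : 'I_L -> X * Th -> R) (phi : 'I_M -> X * Th -> R)
  (x : X) : 'M[R]_(L, M) := \matrix_(i, j) Epost (fun z => g i z * phi j z) x.

Definition middle_mat (L M : nat) (g : 'I_L -> X * Th -> R)
  (phi : 'I_M -> X * Th -> R) : 'M[R]_L :=
  \matrix_(i, j) Emarg (fun x =>
     (Rpost g phi x *m invmx (Qpost phi x) *m (Rpost g phi x)^T) i j).

End Bayes.

Definition psd {R : realType} (L : nat) (A : 'M[R]_L) : Prop :=
  forall v : 'cV[R]_L, 0 <= (v^T *m A *m v) ord0 ord0.

Definition loewner_ge {R : realType} (L : nat) (A B : 'M[R]_L) : Prop :=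
  psd (A - B).

(* Write <f, h>_x := E_{theta|x}[f h]. For almost every x in the support,
   R_{g phi|x} Q_{phi|x}^-1 R_{g phi|x}^T is the Gram matrix, for <., .>_x, of
   the orthogonal projections of the g_l onto the span of the phi_k(x, .).
   Since zeta is <., .>_x-orthogonal to every phi_k, projecting g - zeta gives
   the same matrix, so Bessel's inequality bounds it by the posterior second
   moments of g - zeta; averaging over x (E_x E_{theta|x} = E_{x,theta}) gives
   the first inequality.  For the second, put a := Q_phi^-1 R_{g phi}^T v; then
   v^T R_{g phi} Q_phi^-1 R_{g phi}^T v = E[(v.g)^2] - E[(v.g - a.phi)^2], and
   conditionally on x this difference is at most the quadratic form of the
   posterior projection, which is the best approximation of v.g in the span
   of the phi_k(x, .). *)

From HB Require Import structures.
From mathcomp Require Import all_boot all_order all_algebra.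
From mathcomp Require Import all_classical all_reals all_analysis.
From mathcomp Require Import measurable_realfun ring lra.
Set Implicit Arguments.
Unset Strict Implicit.
Unset Printing Implicit Defensive.
Import Order.TTheory GRing.Theory Num.Theory.
Import numFieldNormedType.Exports.
Local Open Scope classical_set_scope.
Local Open Scope ring_scope.

Section quadratic_form.
Context {R : realFieldType}.

Definition qf m n (u : 'cV[R]_m) (A : 'M[R]_(m, n)) (v : 'cV[R]_n) : R :=
  (u^T *m A *m v) ord0 ord0.

Lemma qfE m n (u : 'cV[R]_m) (A : 'M[R]_(m, n)) (v : 'cV[R]_n) :
  qf u A v = \sum_(i < m) \sum_(j < n) u i ord0 * v j ord0 * A i j.
Proof.
rewrite /qf mxE exchange_big /=; apply: eq_bigr => i _.
rewrite mxE big_distrl /=; apply: eq_bigr => j _.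
by rewrite !mxE mulrAC mulrC.
Qed.

Lemma qfDl m n (u u' : 'cV[R]_m) (A : 'M[R]_(m, n)) v :
  qf (u + u') A v = qf u A v + qf u' A v.
Proof. by rewrite /qf linearD /= !mulmxDl mxE. Qed.

Lemma qfDr m n (u : 'cV[R]_m) (A : 'M[R]_(m, n)) v v' :
  qf u A (v + v') = qf u A v + qf u A v'.
Proof. by rewrite /qf mulmxDr mxE. Qed.

Lemma qfNl m n (u : 'cV[R]_m) (A : 'M[R]_(m, n)) v : qf (- u) A v = - qf u A v.
Proof. by rewrite /qf linearN /= !mulNmx mxE. Qed.

Lemma qfNr m n (u : 'cV[R]_m) (A : 'M[R]_(m, n)) v : qf u A (- v) = - qf u A v.
Proof. by rewrite /qf mulmxN mxE. Qed.

Lemma qfBm n (v : 'cV[R]_n) (A B : 'M[R]_n) : qf v (A - B) v = qf v A v - qf v B v.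
Proof. by rewrite /qf mulmxBr mulmxBl !mxE. Qed.

Lemma qf_delta m n (i : 'I_m) (j : 'I_n) (A : 'M[R]_(m, n)) :
  qf (delta_mx i ord0) A (delta_mx j ord0) = A i j.
Proof. by rewrite /qf trmx_delta -rowE -colE !mxE. Qed.

Lemma qf_mulmxr m n k (u : 'cV[R]_m) (A : 'M[R]_(m, n)) (B : 'M[R]_(n, k)) v :
  qf u A (B *m v) = qf u (A *m B) v.
Proof. by rewrite /qf !mulmxA. Qed.

Lemma qf_mulmxl m n k (u : 'cV[R]_m) (A : 'M[R]_(k, m)) (B : 'M[R]_(k, n)) v :
  qf (A *m u) B v = qf u (A^T *m B) v.
Proof. by rewrite /qf trmx_mul !mulmxA. Qed.

Lemma psd_sym_entry_bound n (A : 'M[R]_n) (i j : 'I_n) :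
  A^T = A -> (forall v, 0 <= qf v A v) -> `|A i j| <= A i i + A j j.
Proof.
move=> AT A_psd; have Aji : A j i = A i j by rewrite -[in LHS]AT mxE.
have := A_psd (delta_mx i ord0); have := A_psd (delta_mx j ord0).
have := A_psd (delta_mx i ord0 + delta_mx j ord0).
have := A_psd (delta_mx i ord0 - delta_mx j ord0).
rewrite !(qfDl, qfDr, qfNl, qfNr, qf_delta) Aji => *.
rewrite ler_norml; apply/andP; split; lra.
Qed.

End quadratic_form.

Section measurable_matrix.
Context {R : realType} {d : measure_display} {T : measurableType d}.

Lemma measurable_invr : measurable_fun [set: R] GRing.inv.
Proof.
have -> : [set: R] = ~` [set 0] `|` [set 0] by rewrite setUC setUCr.
apply/measurable_funU; [exact: measurableC|by []|split]; last first.
  exact: measurable_fun_set1.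
apply: open_continuous_measurable_fun.
  exact/closed_openC/accessible_closed_set1/hausdorff_accessible/Rhausdorff.
by move=> x; rewrite inE /= => /eqP x0; exact: inv_continuous.
Qed.

Lemma measurable_funV (f : T -> R) : measurable_fun setT f ->
  measurable_fun setT (fun x => (f x)^-1).
Proof. exact: measurableT_comp measurable_invr. Qed.

Definition measurable_mx m n (A : T -> 'M[R]_(m, n)) :=
  forall i j, measurable_fun setT (fun x => A x i j).

Lemma measurable_mx_mul m n k (A : T -> 'M[R]_(m, n)) (B : T -> 'M[R]_(n, k)) :
  measurable_mx A -> measurable_mx B -> measurable_mx (fun x => A x *m B x).
Proof.
move=> mA mB i j; under eq_fun do rewrite mxE.
by apply: measurable_sum => l; exact: measurable_funM.
Qed.

Lemma measurable_mx_tr m n (A : T -> 'M[R]_(m, n)) :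
  measurable_mx A -> measurable_mx (fun x => (A x)^T).
Proof. by move=> mA i j; under eq_fun do rewrite mxE; exact: mA. Qed.

Lemma measurable_det n (A : T -> 'M[R]_n) :
  measurable_mx A -> measurable_fun setT (fun x => \det (A x)).
Proof.
move=> mA; apply: measurable_sum => s.
apply: measurable_funM; first exact: measurable_cst.
by apply: measurable_prod => i _; exact: mA.
Qed.

Lemma measurable_mx_inv n (A : T -> 'M[R]_n) :
  measurable_mx A -> measurable_mx (fun x => invmx (A x)).
Proof.
move=> mA i j; rewrite /invmx.
under eq_fun do rewrite (fun_if (fun B : 'M[R]_n => B i j)) mxE unitmxE unitfE.
apply: measurable_fun_ifT; last exact: mA.
- apply: measurable_neg; apply: measurable_fun_eqr; last exact: measurable_cst.
  exact: measurable_det.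
- apply: measurable_funM; first exact/measurable_funV/measurable_det.
  under eq_fun do rewrite mxE.
  apply: measurable_funM; first exact: measurable_cst.
  by apply: measurable_det => k l; under eq_fun do rewrite !mxE; exact: mA.
Qed.

Lemma measurable_qf m n (u : 'cV[R]_m) (A : T -> 'M[R]_(m, n)) (v : 'cV[R]_n) :
  measurable_mx A -> measurable_fun setT (fun x => qf u (A x) v).
Proof.
move=> mA; under eq_fun do rewrite qfE.
do 2![apply: measurable_sum => ?]; exact/measurable_funM/mA.
Qed.

End measurable_matrix.

Section weighted_integral.
Context {R : realType} {d : measure_display} {T : measurableType d}.
Variables (m : {measure set T -> \bar R}) (w : T -> R).
Hypotheses (mw : measurable_fun setT w) (w_ge0 : forall x, 0 <= w x).
Implicit Types f h : T -> R.

(* Ejoint, Emarg and Epost f x are Ew for the weights p, marg and post x. *)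
Definition Ew f : R := Rintegral m setT (fun x => f x * w x).

Definition w_integrable f := m.-integrable setT (EFin \o (fun x => f x * w x)).

Definition L2w f : Prop :=
  measurable_fun setT f /\ (\int[m]_x ((f x) ^+ 2 * w x)%:E < +oo)%E.

Definition gramw M N (f : 'I_M -> T -> R) (h : 'I_N -> T -> R) : 'M[R]_(M, N) :=
  \matrix_(i, j) Ew (fun x => f i x * h j x).

Definition lincomb n (a : 'cV[R]_n) (f : 'I_n -> T -> R) (x : T) : R :=
  \sum_i a i ord0 * f i x.

Lemma L2wP f : L2w f <-> measurable_fun setT f /\ w_integrable (fun x => f x ^+ 2).
Proof.
have abs_sqrw : (\int[m]_x `|(EFin \o (fun x => (f x ^+ 2 * w x)%R)) x| =
                 \int[m]_x (f x ^+ 2 * w x)%:E)%E.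
  by apply: eq_integral => x _; rewrite /= ger0_norm // mulr_ge0 ?sqr_ge0.
rewrite /L2w /w_integrable; split=> -[mf fi]; split => //.
  apply/integrableP; rewrite abs_sqrw; split => //.
  by apply/measurable_EFinP; apply: measurable_funM => //; exact: measurable_funX.
by move/integrableP: fi => [_]; rewrite abs_sqrw.
Qed.

Lemma w_integrable0 : w_integrable (fun _ => 0).
Proof.
by apply: (eq_integrable measurableT _ _ _ (integrable0 _ _)) => x _ /=; rewrite mul0r.
Qed.

Lemma w_integrableD f h : w_integrable f -> w_integrable h ->
  w_integrable (fun x => f x + h x).
Proof.
move=> fi hi.
apply: (eq_integrable measurableT _ _ _ (integrableD measurableT fi hi)) => x _ /=.
by rewrite mulrDl EFinD.
Qed.

Lemma w_integrableZ c f : w_integrable f -> w_integrable (fun x => c * f x).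
Proof.
move=> fi.
apply: (eq_integrable measurableT _ _ _ (integrableZl measurableT c fi)) => x _ /=.
by rewrite -EFinM mulrA.
Qed.

Lemma w_integrableB f h : w_integrable f -> w_integrable h ->
  w_integrable (fun x => f x - h x).
Proof.
move=> fi hi.
apply: (eq_integrable measurableT _ _ _ (integrableB measurableT fi hi)) => x _ /=.
by rewrite mulrBl EFinB.
Qed.

Lemma w_integrable_sum I (s : seq I) (F : I -> T -> R) :
  (forall i, w_integrable (F i)) -> w_integrable (fun x => \sum_(i <- s) F i x).
Proof.
move=> Fi; elim: s => [|i s IH].
  by under eq_fun do rewrite big_nil; exact: w_integrable0.
by under eq_fun do rewrite big_cons; exact: w_integrableD.
Qed.

Lemma L2w0 : L2w (fun _ => 0).
Proof.
apply/L2wP; split; first exact: measurable_cst.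
by apply: (eq_integrable measurableT _ _ _ w_integrable0) => x _ /=; rewrite expr0n.
Qed.

Lemma L2wD f h : L2w f -> L2w h -> L2w (fun x => f x + h x).
Proof.
move=> /L2wP[mf fi] /L2wP[mh hi]; apply/L2wP; split; first exact: measurable_funD.
have := w_integrableD (w_integrableZ 2 fi) (w_integrableZ 2 hi).
apply: le_integrable => //.
  apply/measurable_EFinP; apply: measurable_funM => //.
  by apply: measurable_funX; exact: measurable_funD.
move=> x _ /=; rewrite lee_fin ger0_norm; last by rewrite mulr_ge0 ?sqr_ge0.
apply: le_trans (ler_norm _).
have := mulr_ge0 (w_ge0 x) (sqr_ge0 (f x - h x)); nra.
Qed.

Lemma L2wZ c f : L2w f -> L2w (fun x => c * f x).
Proof.
move=> /L2wP[mf fi]; apply/L2wP; split; first exact: measurable_funM.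
apply: (eq_integrable measurableT _ _ _ (w_integrableZ (c ^+ 2) fi)) => x _ /=.
by rewrite exprMn.
Qed.

Lemma L2wB f h : L2w f -> L2w h -> L2w (fun x => f x - h x).
Proof.
move=> Lf Lh; have := L2wD Lf (L2wZ (-1) Lh).
by congr L2w; apply/funext => x; rewrite mulN1r.
Qed.

Lemma L2w_sum I (s : seq I) (a : I -> R) (f : I -> T -> R) :
  (forall i, L2w (f i)) -> L2w (fun x => \sum_(i <- s) a i * f i x).
Proof.
move=> Lf; elim: s => [|i s IH]; first by under eq_fun do rewrite big_nil; exact: L2w0.
by under eq_fun do rewrite big_cons; apply: L2wD => //; exact: L2wZ.
Qed.

Lemma lincomb_delta n i (f : 'I_n -> T -> R) : lincomb (delta_mx i ord0) f = f i.
Proof.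
apply/funext => x; rewrite /lincomb (bigD1 i) //= big1 => [|j /negbTE ji].
  by rewrite mxE !eqxx mul1r addr0.
by rewrite mxE ji mul0r.
Qed.

Lemma L2w_lincomb n (a : 'cV[R]_n) (f : 'I_n -> T -> R) :
  (forall i, L2w (f i)) -> L2w (lincomb a f).
Proof. exact: L2w_sum. Qed.

Lemma w_integrable_mul f h : L2w f -> L2w h -> w_integrable (fun x => f x * h x).
Proof.
move=> /L2wP[mf fi] /L2wP[mh hi].
apply: (le_integrable measurableT _ _ (w_integrableD fi hi)).
  by apply/measurable_EFinP; apply: measurable_funM => //; exact: measurable_funM.
move=> x _ /=; rewrite lee_fin !normrM (ger0_norm (w_ge0 x)).
rewrite [`|_ + _|]ger0_norm ?addr_ge0 ?sqr_ge0 //; apply: ler_wpM2r => //.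
rewrite -[f x ^+ 2]real_normK ?num_real // -[h x ^+ 2]real_normK ?num_real //.
have := sqr_ge0 (`|f x| - `|h x|); nra.
Qed.

Lemma EwD f h : w_integrable f -> w_integrable h ->
  Ew (fun x => f x + h x) = Ew f + Ew h.
Proof.
by move=> fi hi; rewrite /Ew -RintegralD //; apply: eq_Rintegral => x _; rewrite mulrDl.
Qed.

Lemma EwZ c f : w_integrable f -> Ew (fun x => c * f x) = c * Ew f.
Proof.
by move=> fi; rewrite /Ew -RintegralZl //; apply: eq_Rintegral => x _; rewrite mulrA.
Qed.

Lemma EwB f h : w_integrable f -> w_integrable h ->
  Ew (fun x => f x - h x) = Ew f - Ew h.
Proof.
by move=> fi hi; rewrite /Ew -RintegralB //; apply: eq_Rintegral => x _; rewrite mulrBl.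
Qed.

Lemma Ew_sum I (s : seq I) (F : I -> T -> R) : (forall i, w_integrable (F i)) ->
  Ew (fun x => \sum_(i <- s) F i x) = \sum_(i <- s) Ew (F i).
Proof.
move=> Fi; elim: s => [|i s IH].
  rewrite big_nil /Ew /Rintegral.
  by under eq_integral do rewrite big_nil mul0r; rewrite integral0.
under eq_fun do rewrite big_cons.
by rewrite EwD ?IH ?big_cons //; exact: w_integrable_sum.
Qed.

Lemma Ew_ge0_ae f : measurable_fun setT f ->
  {ae m, forall x, w x != 0 -> 0 <= f x} -> 0 <= Ew f.
Proof.
move=> mf f_ae; have mfw : measurable_fun setT (EFin \o (fun x => f x * w x)).
  exact/measurable_EFinP/measurable_funM.
rewrite /Ew /Rintegral (ae_eq_integral ((EFin \o (fun x => (f x * w x)%R))^\+)%E) //.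
- by rewrite fine_ge0 // integral_ge0 // => x _; exact: funepos_ge0.
- exact: measurable_funepos.
apply: filterS f_ae => x fx _; rewrite funeposE /= max_l // lee_fin.
by have [->|/fx f0] := eqVneq (w x) 0; rewrite ?mulr0 // mulr_ge0.
Qed.

Lemma w_integrable_le_ae f h : measurable_fun setT f -> w_integrable h ->
  {ae m, forall x, w x != 0 -> `|f x| <= h x} -> w_integrable f.
Proof.
move=> mf /integrableP[mhw hoo] f_ae.
have mfw : measurable_fun setT (EFin \o (fun x => f x * w x)).
  exact/measurable_EFinP/measurable_funM.
apply/integrableP; split => //; apply: le_lt_trans hoo.
apply: ae_ge0_le_integral => //; try exact: measurableT_comp.
apply: filterS f_ae => x fx _ /=; rewrite lee_fin !normrM (ger0_norm (w_ge0 x)).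
have [->|/fx hfx] := eqVneq (w x) 0; first by rewrite mulr0.
by apply: ler_wpM2r => //; exact: le_trans hfx (ler_norm _).
Qed.

Lemma w_integrable_qf k n (u : 'cV[R]_k) (A : T -> 'M[R]_(k, n)) v :
  (forall i j, w_integrable (fun x => A x i j)) -> w_integrable (fun x => qf u (A x) v).
Proof.
move=> Ai; under eq_fun do rewrite qfE.
by do 2![apply: w_integrable_sum => ?]; exact: w_integrableZ.
Qed.

Lemma Ew_qf k n (u : 'cV[R]_k) (A : T -> 'M[R]_(k, n)) v :
  (forall i j, w_integrable (fun x => A x i j)) ->
  Ew (fun x => qf u (A x) v) = qf u (\matrix_(i, j) Ew (fun x => A x i j)) v.
Proof.
move=> Ai; under eq_fun do rewrite qfE; rewrite qfE Ew_sum => [|i]; last first.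
  by apply: w_integrable_sum => j; exact: w_integrableZ.
apply: eq_bigr => i _; rewrite Ew_sum => [|j]; last exact: w_integrableZ.
by apply: eq_bigr => j _; rewrite EwZ ?mxE.
Qed.

Lemma Ew_sqr_ge0 f : 0 <= Ew (fun x => f x * f x).
Proof. by apply: Rintegral_ge0 => x _; rewrite mulr_ge0 // -expr2 sqr_ge0. Qed.

Lemma Ew_sqrB f h : L2w f -> L2w h ->
  Ew (fun x => (f x - h x) * (f x - h x)) =
  Ew (fun x => f x * f x) - 2 * Ew (fun x => f x * h x) + Ew (fun x => h x * h x).
Proof.
move=> Lf Lh; have ff := w_integrable_mul Lf Lf.
have fh := w_integrable_mul Lf Lh; have hh := w_integrable_mul Lh Lh.
rewrite -EwZ // -EwB ?w_integrableZ // -EwD ?w_integrableB ?w_integrableZ //.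
by congr Ew; apply/funext => x; ring.
Qed.

Lemma Ew_sum_mul M N (a : 'cV[R]_M) (f : 'I_M -> T -> R)
    (b : 'cV[R]_N) (h : 'I_N -> T -> R) :
  (forall i, L2w (f i)) -> (forall j, L2w (h j)) ->
  Ew (fun x => lincomb a f x * lincomb b h x) = qf a (gramw f h) b.
Proof.
move=> Lf Lh; rewrite qfE.
have fhi i j : w_integrable (fun x => a i ord0 * b j ord0 * (f i x * h j x)).
  exact/w_integrableZ/w_integrable_mul.
transitivity (Ew (fun x => \sum_i \sum_j a i ord0 * b j ord0 * (f i x * h j x))).
  congr Ew; apply/funext => x; rewrite /lincomb mulr_suml; apply: eq_bigr => i _.
  by rewrite mulr_sumr; apply: eq_bigr => j _; rewrite mulrACA.
rewrite Ew_sum => [|i]; last exact: w_integrable_sum.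
apply: eq_bigr => i _; rewrite Ew_sum //; apply: eq_bigr => j _.
by rewrite EwZ ?mxE //; exact: w_integrable_mul.
Qed.

Lemma gramw_sym M (f : 'I_M -> T -> R) : (gramw f f)^T = gramw f f.
Proof.
by apply/matrixP => i j; rewrite !mxE; congr Ew; apply/funext => x; rewrite mulrC.
Qed.

Lemma gramwB_orth L M (f z : 'I_L -> T -> R) (phi : 'I_M -> T -> R) :
  (forall l, L2w (f l)) -> (forall l, L2w (z l)) -> (forall k, L2w (phi k)) ->
  (forall l k, Ew (fun x => z l x * phi k x) = 0) ->
  gramw (fun l x => f l x - z l x) phi = gramw f phi.
Proof.
move=> Lf Lz Lphi zphi; apply/matrixP => l k; rewrite !mxE -[RHS]subr0 -(zphi l k).
rewrite -EwB; try exact: w_integrable_mul.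
by congr Ew; apply/funext => x; rewrite mulrBl.
Qed.

Lemma Ew_sqr_eq0 f : L2w f -> Ew (fun x => f x * f x) = 0 ->
  {ae m, forall x, w x != 0 -> f x = 0}.
Proof.
move=> Lf E0; have ffi := w_integrable_mul Lf Lf.
have ff0 : (\int[m]_x (EFin \o (fun x => (f x * f x * w x)%R)) x = 0)%E.
  rewrite -(fineK (integrable_fin_num measurableT ffi)).
  by move: E0; rewrite /Ew /Rintegral => ->.
have : ae_eq m setT (EFin \o (fun x => f x * f x * w x)) (cst 0%E).
  apply/(ae_eq_integral_abs _ measurableT); first by case/integrableP: ffi.
  rewrite -ff0; apply: eq_integral => x _ /=.
  by rewrite ger0_norm // mulr_ge0 // -expr2 sqr_ge0.
apply: filterS => x /(_ I) /= [] /eqP; rewrite !mulf_eq0 orbb.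
by case/orP => [/eqP -> //|/eqP -> /negP].
Qed.

Lemma gramw_unit M (phi : 'I_M -> T -> R) : (forall k, L2w (phi k)) ->
  (forall c : 'I_M -> R,
     {ae m, forall x, w x != 0 -> \sum_k c k * phi k x = 0} -> forall k, c k = 0) ->
  gramw phi phi \in unitmx.
Proof.
move=> Lphi indep; rewrite unitmxE unitfE; apply/negP => /det0P[v v0 vG].
move/eqP: v0; apply; apply/rowP => k; rewrite mxE.
apply: (indep (fun k => v ord0 k)).
have := Ew_sqr_eq0 (L2w_lincomb v^T Lphi).
rewrite Ew_sum_mul // /qf trmxK vG mul0mx mxE => /(_ erefl).
apply: filterS => x + wx0 => /(_ wx0) lc0; rewrite -[X in _ = X]lc0.
by apply: eq_bigr => i _; rewrite mxE.
Qed.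

End weighted_integral.

Section projection.
Context {R : realType} {d : measure_display} {T : measurableType d}.
Variables (m : {measure set T -> \bar R}) (w : T -> R).
Hypotheses (mw : measurable_fun setT w) (w_ge0 : forall x, 0 <= w x).
Variables (L M : nat) (f : 'I_L -> T -> R) (phi : 'I_M -> T -> R).
Hypotheses (f_L2 : forall l, L2w m w (f l)) (phi_L2 : forall k, L2w m w (phi k)).

Local Notation G := (gramw m w phi phi).
Local Notation C := (gramw m w f phi).

Definition gram_proj : 'M[R]_L := C *m invmx G *m C^T.

Lemma gram_proj_sym : gram_proj^T = gram_proj.
Proof. by rewrite /gram_proj !trmx_mul trmxK trmx_inv gramw_sym mulmxA. Qed.

Hypothesis G_unit : G \in unitmx.

(* coefficients of the projection of [lincomb v f] onto the span of [phi] *)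
Local Notation coef v := (invmx G *m C^T *m v).

Lemma qf_coef v b : qf (coef v) G b = qf v C b.
Proof.
rewrite qf_mulmxl trmx_mul trmxK trmx_inv gramw_sym -mulmxA.
by rewrite [invmx G *m G]mulVmx // mulmx1.
Qed.

Lemma Ew_proj_sqr v :
  Ew m w (fun x => lincomb (coef v) phi x * lincomb (coef v) phi x) =
  qf v gram_proj v.
Proof. by rewrite Ew_sum_mul // qf_coef qf_mulmxr !mulmxA. Qed.

Lemma Ew_mul_proj v :
  Ew m w (fun x => lincomb v f x * lincomb (coef v) phi x) = qf v gram_proj v.
Proof. by rewrite Ew_sum_mul // qf_mulmxr !mulmxA. Qed.

Lemma gram_proj_ge0 v : 0 <= qf v gram_proj v.
Proof. by rewrite -Ew_proj_sqr; exact: Ew_sqr_ge0. Qed.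

Lemma Ew_sqr_sub_proj v :
  Ew m w (fun x => lincomb v f x * lincomb v f x) -
  Ew m w (fun x => (lincomb v f x - lincomb (coef v) phi x) *
                   (lincomb v f x - lincomb (coef v) phi x)) = qf v gram_proj v.
Proof.
have Lu := L2w_lincomb mw w_ge0 v f_L2.
have Lpsi := L2w_lincomb mw w_ge0 (coef v) phi_L2.
by rewrite Ew_sqrB // Ew_proj_sqr Ew_mul_proj; lra.
Qed.

Lemma gram_proj_le v :
  qf v gram_proj v <= Ew m w (fun x => lincomb v f x * lincomb v f x).
Proof. by rewrite -Ew_sqr_sub_proj gerBl Ew_sqr_ge0. Qed.

Lemma Ew_sqr_sub_residual_le v (a : 'cV[R]_M) :
  Ew m w (fun x => lincomb v f x * lincomb v f x) -
  Ew m w (fun x => (lincomb v f x - lincomb a phi x) *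
                   (lincomb v f x - lincomb a phi x))
  <= qf v gram_proj v.
Proof.
have Lu := L2w_lincomb mw w_ge0 v f_L2.
have Lpsi := L2w_lincomb mw w_ge0 (coef v) phi_L2.
have La := L2w_lincomb mw w_ge0 a phi_L2.
(* 0 <= Ew ((psi - a.phi)^2) for the projection psi; by the normal equations
   (qf_coef) its cross term is Ew (u * a.phi), u := lincomb v f. *)
have := Ew_sqr_ge0 m w_ge0 (fun x => lincomb (coef v) phi x - lincomb a phi x).
rewrite !Ew_sqrB // Ew_proj_sqr !Ew_sum_mul // qf_coef; lra.
Qed.

End projection.

Section posterior.
Context {R : realType} {d1 d2 : measure_display}
  {X : measurableType d1} {Th : measurableType d2}.
Variable nu : {sigma_finite_measure set Th -> \bar R}.

Lemma measurable_fun_Rintegral (K : X * Th -> R) : measurable_fun setT K ->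
  measurable_fun setT (fun x => Rintegral nu setT (fun t => K (x, t))).
Proof.
move=> mK; apply: measurableT_comp; first exact: fine_measurable.
have mKe : measurable_fun setT (EFin \o K) by exact/measurable_EFinP.
under eq_fun do rewrite integralE.
apply: emeasurable_funB.
- apply: eq_measurable_fun (measurable_fun_fubini_tonelli_F _
    (measurable_funepos mKe) (funepos_ge0 _)) => x _.
  by apply: eq_integral => t _; rewrite !funeposE.
- apply: eq_measurable_fun (measurable_fun_fubini_tonelli_F _
    (measurable_funeneg mKe) (funeneg_ge0 _)) => x _.
  by apply: eq_integral => t _; rewrite !funenegE.
Qed.

Variable p : X * Th -> R.
Hypotheses (mp : measurable_fun setT p) (p_ge0 : forall z, 0 <= p z).

Lemma measurable_marg : measurable_fun setT (marg nu p).
Proof. exact: measurable_fun_Rintegral. Qed.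

Lemma marg_ge0 x : 0 <= marg nu p x.
Proof. by rewrite fine_ge0 // integral_ge0 // => t _; rewrite lee_fin. Qed.

Lemma suppX_marg x : marg nu p x != 0 -> suppX nu p x.
Proof. by rewrite /suppX /= lt0r marg_ge0 andbT. Qed.

Lemma post_ge0 x t : 0 <= post nu p x t.
Proof. by rewrite divr_ge0 // marg_ge0. Qed.

Lemma measurable_post_pair : measurable_fun setT (fun z : X * Th => post nu p z.1 z.2).
Proof.
apply: measurable_funM; first by apply: eq_measurable_fun mp => -[x t].
apply: (measurable_funV (f := fun z : X * Th => marg nu p z.1)).
exact: measurableT_comp measurable_marg measurable_fst.
Qed.

Lemma measurable_Epost (F : X * Th -> R) : measurable_fun setT F ->
  measurable_fun setT (Epost nu p F).
Proof.
move=> mF; apply: (measurable_fun_Rintegral (K := fun z => F z * post nu p z.1 z.2)).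
exact: measurable_funM mF measurable_post_pair.
Qed.

Lemma measurable_post_gram m n (f : 'I_m -> X * Th -> R) (h : 'I_n -> X * Th -> R) :
  (forall i, measurable_fun setT (f i)) -> (forall j, measurable_fun setT (h j)) ->
  measurable_mx (fun x =>
    gramw nu (post nu p x) (fun i t => f i (x, t)) (fun j t => h j (x, t))).
Proof.
move=> mf mh i j; under eq_fun do rewrite mxE.
apply: (measurable_Epost (F := fun z => f i z * h j z)).
exact: measurable_funM.
Qed.

End posterior.

Section total_expectation.
Context {R : realType} {d1 d2 : measure_display}
  {X : measurableType d1} {Th : measurableType d2}.
Variables (mu : {sigma_finite_measure set X -> \bar R})
          (nu : {sigma_finite_measure set Th -> \bar R}) (p : X * Th -> R).
Hypotheses (mp : measurable_fun setT p) (p_ge0 : forall z, 0 <= p z).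

Lemma Epost_mul_marg (F : X * Th -> R) x :
  measurable_fun setT F -> (forall z, 0 <= F z) ->
  (\int[nu]_t (p (x, t))%:E)%E \is a fin_num ->
  (\int[nu]_t (F (x, t) * p (x, t))%:E)%E \is a fin_num ->
  ((Epost nu p F x * marg nu p x)%:E = \int[nu]_t (F (x, t) * p (x, t))%:E)%E.
Proof.
move=> mF F0 Kfin Gfin; rewrite /Epost /post /marg.
set K := (\int[nu]_t _)%E in Kfin *.
have mFp : measurable_fun setT (fun t => F (x, t) * p (x, t)).
  by apply: measurable_funM; exact: measurable_fun_pair2.
(* if marg x = 0, post x is junk (x / 0 = 0), but p(x, .) = 0 nu-a.e. *)
have [K0|K0] := eqVneq (fine K) 0.
  have p0 : ae_eq nu setT (fun t => (p (x, t))%:E) (cst 0%E).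
    apply/(ae_eq_integral_abs nu measurableT).
      exact/measurable_EFinP/measurable_fun_pair2.
    have -> : 0%E = K by rewrite -(fineK Kfin) K0.
    apply: eq_integral => t _.
    by rewrite gee0_abs // lee_fin.
  rewrite K0 mulr0 (ae_eq_integral (cst 0%E)) ?integral0 //.
  - exact/measurable_EFinP.
  - by apply: filterS p0 => t /(_ I) [->]; rewrite mulr0.
have Kpos : 0 < fine K.
  by rewrite lt0r K0 fine_ge0 // integral_ge0 // => t _; rewrite lee_fin.
set G := (\int[nu]_t _)%E in Gfin *; rewrite /Rintegral.
have -> : (\int[nu]_t (F (x, t) * (p (x, t) / fine K))%:E = G * (fine K)^-1%:E)%E.
  rewrite -ge0_integralZr //; first by apply: eq_integral => t _; rewrite -EFinM mulrA.
  - exact/measurable_EFinP.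
  - by move=> t _; rewrite lee_fin mulr_ge0.
  - by rewrite lee_fin invr_ge0 ltW.
by rewrite fineM // divfK ?fineK // gt_eqF.
Qed.

Lemma integrable_section_integral (H : X * Th -> R) : (forall z, 0 <= H z) ->
  (mu \x nu)%E.-integrable setT (EFin \o H) ->
  mu.-integrable setT (fun x => \int[nu]_t (H (x, t))%:E)%E /\
  (\int[mu]_x \int[nu]_t (H (x, t))%:E = \int[(mu \x nu)%E]_z (H z)%:E)%E.
Proof.
move=> H0 /integrableP[mH Hoo].
have H0e z : (0 <= (EFin \o H) z)%E by rewrite lee_fin.
have sec_eq : (\int[mu]_x \int[nu]_t (H (x, t))%:E = \int[(mu \x nu)%E]_z (H z)%:E)%E.
  by rewrite (fubini_tonelli1 (m1 := mu) (m2 := nu) _ mH H0e).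
split => //; apply/integrableP; split.
  exact: (measurable_fun_fubini_tonelli_F (m2 := nu) _ mH H0e).
rewrite (eq_integral (fun x => \int[nu]_t (H (x, t))%:E)%E) => [|x _].
  rewrite sec_eq (eq_integral (fun z => `|(EFin \o H) z|)%E) //.
  by move=> z _; rewrite gee0_abs.
by rewrite gee0_abs // integral_ge0 // => t _; rewrite lee_fin.
Qed.

Hypothesis p_fin : (\int[(mu \x nu)%E]_z (p z)%:E < +oo)%E.

Lemma marg_fin_num_ae : {ae mu, forall x, (\int[nu]_t (p (x, t))%:E)%E \is a fin_num}.
Proof.
have pi : (mu \x nu)%E.-integrable setT (EFin \o p).
  apply/integrableP; split; first exact/measurable_EFinP.
  by rewrite (eq_integral (fun z => (p z)%:E)) // => z _; rewrite gee0_abs ?lee_fin.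
apply: filterS (integrable_ae measurableT (integrable_section_integral p_ge0 pi).1).
by move=> x /(_ I).
Qed.

Lemma Emarg_Epost (F : X * Th -> R) : measurable_fun setT F -> (forall z, 0 <= F z) ->
  w_integrable (mu \x nu)%E p F ->
  w_integrable mu (marg nu p) (Epost nu p F) /\
  Emarg mu nu p (Epost nu p F) = Ejoint mu nu p F.
Proof.
move=> mF F0 Fi.
have Fp0 z : 0 <= F z * p z by exact: mulr_ge0.
have [Gi tonelli] := integrable_section_integral Fp0 Fi.
have e_ae : ae_eq mu setT (EFin \o (fun x => Epost nu p F x * marg nu p x))
                         (fun x => \int[nu]_t (F (x, t) * p (x, t))%:E)%E.
  apply: filterS2 marg_fin_num_ae (integrable_ae measurableT Gi) => x Kx Gx _.
  by apply: Epost_mul_marg => //; exact: Gx.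
have me : measurable_fun setT (EFin \o (fun x => Epost nu p F x * marg nu p x)).
  apply/measurable_EFinP/measurable_funM; last exact: measurable_marg.
  exact: measurable_Epost.
have e_int := ae_eq_integral _ _ measurableT me (measurable_int _ Gi) e_ae.
split; last by rewrite /Emarg /Ejoint /Rintegral e_int tonelli.
apply/integrableP; split => //.
rewrite (eq_integral (EFin \o (fun x => Epost nu p F x * marg nu p x))) => [|x _].
  by rewrite e_int tonelli; exact: integrable_lty.
rewrite /= ger0_norm // mulr_ge0 ?marg_ge0 // Rintegral_ge0 // => t _.
by rewrite mulr_ge0 ?post_ge0.
Qed.

End total_expectation.

Section main.
Context {R : realType} {d1 d2 : measure_display}
  {X : measurableType d1} {Th : measurableType d2}.
Variables (mu : {sigma_finite_measure set X -> \bar R})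
          (nu : {sigma_finite_measure set Th -> \bar R}) (p : X * Th -> R)
          (L M : nat) (g zeta : 'I_L -> X * Th -> R) (phi : 'I_M -> X * Th -> R).
Hypotheses (pdf : is_joint_pdf mu nu p)
  (g_W2 : forall l, inW2 mu nu p (g l)) (phi_W2 : forall k, inW2 mu nu p (phi k))
  (zeta_W2 : forall l, inW2 mu nu p (zeta l))
  (zeta_orth : {ae mu, forall x, suppX nu p x ->
     forall l k, Epost nu p (fun z => zeta l z * phi k z) x = 0})
  (Qpost_unit : {ae mu, forall x, suppX nu p x -> Qpost nu p phi x \in unitmx}).

Let mp : measurable_fun setT p. Proof. by case: pdf. Qed.
Let p_ge0 : forall z, 0 <= p z. Proof. by case: pdf. Qed.
Let p_fin : (\int[(mu \x nu)%E]_z (p z)%:E < +oo)%E.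
Proof. by case: pdf => _ _ ->; exact: ltry. Qed.

Let measurable_post x : measurable_fun setT (post nu p x).
Proof. exact: measurable_fun_pair2 x (measurable_post_pair nu mp). Qed.

Local Notation sec f x := (fun i t => f i (x, t)).
Local Notation U := (fun l z => g l z - zeta l z).

Definition post_proj x : 'M[R]_L := gram_proj nu (post nu p x) (sec g x) (sec phi x).

Definition regular x := [/\ forall l, L2w nu (post nu p x) (sec g x l),
  forall l, L2w nu (post nu p x) (sec zeta x l),
  forall k, L2w nu (post nu p x) (sec phi x k),
  forall l k, Epost nu p (fun z => zeta l z * phi k z) x = 0 &
  Qpost nu p phi x \in unitmx].

Lemma inW2_sections n (f : 'I_n -> X * Th -> R) : (forall i, inW2 mu nu p (f i)) ->
  {ae mu, forall x, suppX nu p x -> forall i, L2w nu (post nu p x) (sec f x i)}.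
Proof.
move=> f_W2; apply: filterS (filter_forall _ (fun i => (f_W2 i).2)) => x f_x sx i.
by split; [exact: measurable_fun_pair2 (f_W2 i).1.1|exact: f_x].
Qed.

Lemma regular_ae : {ae mu, forall x, suppX nu p x -> regular x}.
Proof.
apply: filterS (filterI
  (filterI (inW2_sections g_W2) (inW2_sections zeta_W2))
  (filterI (inW2_sections phi_W2) (filterI zeta_orth Qpost_unit))).
by move=> x [[? ?] [? [? ?]]] sx; split; auto.
Qed.

Lemma post_proj_ge0 x v : regular x -> 0 <= qf v (post_proj x) v.
Proof.
case=> _ _ phi_x _ Q_x; rewrite /post_proj.
exact: (gram_proj_ge0 (measurable_post x) (post_ge0 nu p_ge0 x) _ phi_x Q_x).
Qed.

Lemma post_proj_le x v : regular x ->
  qf v (post_proj x) v <= Epost nu p (fun z => lincomb v U z * lincomb v U z) x.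
Proof.
case=> g_x zeta_x phi_x orth_x Q_x.
have post_x0 := post_ge0 nu p_ge0 x.
rewrite /post_proj /gram_proj -(gramwB_orth (measurable_post x) post_x0 g_x zeta_x) //.
apply: (gram_proj_le (measurable_post x) post_x0 _ phi_x Q_x v) => l.
exact: L2wB.
Qed.

Lemma post_proj_ge_residual x v (a : 'cV[R]_M) : regular x ->
  Epost nu p (fun z => lincomb v g z * lincomb v g z) x -
  Epost nu p (fun z => (lincomb v g z - lincomb a phi z) *
                       (lincomb v g z - lincomb a phi z)) x
  <= qf v (post_proj x) v.
Proof.
case=> g_x _ phi_x _ Q_x; rewrite /post_proj.
exact: (Ew_sqr_sub_residual_le (measurable_post x) (post_ge0 nu p_ge0 x)
  g_x phi_x Q_x v a).
Qed.

Lemma post_proj_bound x i j : regular x ->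
  `|post_proj x i j| <= Epost nu p (fun z => U i z * U i z) x +
                        Epost nu p (fun z => U j z * U j z) x.
Proof.
move=> rx; have diag_le l : post_proj x l l <= Epost nu p (fun z => U l z * U l z) x.
  by have := post_proj_le (delta_mx l ord0) rx; rewrite qf_delta lincomb_delta.
apply: le_trans (lerD (diag_le i) (diag_le j)).
apply: psd_sym_entry_bound => [|v]; first exact: gram_proj_sym.
exact: post_proj_ge0.
Qed.

Lemma measurable_post_proj : measurable_mx post_proj.
Proof.
have mg l := (g_W2 l).1.1; have mphi k := (phi_W2 k).1.1.
apply: measurable_mx_mul; last exact/measurable_mx_tr/measurable_post_gram.
apply: measurable_mx_mul; first exact: measurable_post_gram.
exact/measurable_mx_inv/measurable_post_gram.
Qed.

Lemma L2w_sub_g_zeta l : L2w (mu \x nu)%E p (U l).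
Proof. exact: (L2wB mp p_ge0 (g_W2 l).1 (zeta_W2 l).1). Qed.

Lemma Emarg_Epost_sqr u : L2w (mu \x nu)%E p u ->
  w_integrable mu (marg nu p) (Epost nu p (fun z => u z * u z)) /\
  Ew mu (marg nu p) (Epost nu p (fun z => u z * u z)) =
  Ew (mu \x nu)%E p (fun z => u z * u z).
Proof.
move=> Lu; apply: Emarg_Epost => //; last exact: w_integrable_mul.
- exact: measurable_funM Lu.1 Lu.1.
- by move=> z; rewrite -expr2 sqr_ge0.
Qed.

Lemma w_integrable_post_proj i j :
  w_integrable mu (marg nu p) (fun x => post_proj x i j).
Proof.
apply: (w_integrable_le_ae (measurable_marg nu mp) (marg_ge0 nu p_ge0)
  (measurable_post_proj i j) (w_integrableD (Emarg_Epost_sqr (L2w_sub_g_zeta i)).1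
                                            (Emarg_Epost_sqr (L2w_sub_g_zeta j)).1)).
apply: filterS regular_ae => x rx mx0.
by apply: post_proj_bound; apply: rx; exact: suppX_marg.
Qed.

Lemma qf_middle_mat v :
  qf v (middle_mat mu nu p g phi) v =
  Ew mu (marg nu p) (fun x => qf v (post_proj x) v).
Proof. exact: (esym (Ew_qf v v w_integrable_post_proj)). Qed.

Lemma Qmat_sub_middle_psd : psd (Qmat mu nu p U - middle_mat mu nu p g phi).
Proof.
move=> v; change (0 <= qf v (Qmat mu nu p U - middle_mat mu nu p g phi) v).
have Lu := L2w_lincomb mp p_ge0 v L2w_sub_g_zeta.
have [Eu_int Eu] := Emarg_Epost_sqr Lu.
rewrite qfBm qf_middle_mat -(Ew_sum_mul mp p_ge0 v v L2w_sub_g_zeta L2w_sub_g_zeta) -Eu.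
rewrite -EwB //; last exact: (w_integrable_qf v v w_integrable_post_proj).
apply: (Ew_ge0_ae (measurable_marg nu mp) (marg_ge0 nu p_ge0)).
  apply: measurable_funB; last exact: (measurable_qf v v measurable_post_proj).
  exact: (measurable_Epost nu mp (measurable_funM Lu.1 Lu.1)).
apply: filterS regular_ae => x rx mx0; rewrite subr_ge0.
by apply: post_proj_le; apply: rx; exact: suppX_marg.
Qed.

Lemma middle_sub_RQR_psd : lin_indep_L2 mu nu p phi ->
  psd (middle_mat mu nu p g phi -
       Rmat mu nu p g phi *m invmx (Qmat mu nu p phi) *m (Rmat mu nu p g phi)^T).
Proof.
move=> indep v.
change (0 <= qf v (middle_mat mu nu p g phi - gram_proj (mu \x nu)%E p g phi) v).
have Lg l := (g_W2 l).1; have Lphi k := (phi_W2 k).1.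
have Q_unit := gramw_unit mp p_ge0 Lphi indep.
pose a := invmx (gramw (mu \x nu)%E p phi phi) *m (gramw (mu \x nu)%E p g phi)^T *m v.
have Lu := L2w_lincomb mp p_ge0 v Lg.
have Lr := L2wB mp p_ge0 Lu (L2w_lincomb mp p_ge0 a Lphi).
have [u_int Eu] := Emarg_Epost_sqr Lu; have [r_int Er] := Emarg_Epost_sqr Lr.
rewrite qfBm qf_middle_mat -(Ew_sqr_sub_proj mp p_ge0 Lg Lphi Q_unit v) -/a -Eu -Er.
have qf_int := w_integrable_qf v v w_integrable_post_proj.
rewrite -EwB // -EwB //; last exact: w_integrableB.
apply: (Ew_ge0_ae (measurable_marg nu mp) (marg_ge0 nu p_ge0)).
  apply: measurable_funB; first exact: (measurable_qf v v measurable_post_proj).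
  apply: measurable_funB; apply: (measurable_Epost nu mp).
    exact: measurable_funM Lu.1 Lu.1.
  exact: measurable_funM Lr.1 Lr.1.
apply: filterS regular_ae => x rx mx0; rewrite subr_ge0.
by apply: post_proj_ge_residual; apply: rx; exact: suppX_marg.
Qed.

End main.

Theorem theorem2 (R : realType) (d1 d2 : measure_display)
  (X : measurableType d1) (Th : measurableType d2)
  (mu : {sigma_finite_measure set X -> \bar R})
  (nu : {sigma_finite_measure set Th -> \bar R})
  (p : X * Th -> R) (L M : nat)
  (g : 'I_L -> X * Th -> R) (phi : 'I_M -> X * Th -> R)
  (zeta : 'I_L -> X * Th -> R) :
  is_joint_pdf mu nu p ->
  (forall l, inW2 mu nu p (g l)) ->
  (forall m, inW2 mu nu p (phi m)) ->
  lin_indep_L2 mu nu p phi ->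
  (forall l, inW2 mu nu p (zeta l)) ->
  {ae mu, forall x, suppX nu p x ->
     forall l m, Epost nu p (fun z => zeta l z * phi m z) x = 0} ->
  {ae mu, forall x, suppX nu p x -> Qpost nu p phi x \in unitmx} ->
  loewner_ge (Qmat mu nu p (fun l z => g l z - zeta l z))
             (middle_mat mu nu p g phi)
  /\
  loewner_ge (middle_mat mu nu p g phi)
             (Rmat mu nu p g phi *m invmx (Qmat mu nu p phi) *m (Rmat mu nu p g phi)^T).
Proof.
move=> pdf g_W2 phi_W2 indep zeta_W2 zeta_orth Qpost_unit; split.
- exact: (Qmat_sub_middle_psd pdf g_W2 phi_W2 zeta_W2 zeta_orth Qpost_unit).
- exact: (middle_sub_RQR_psd pdf g_W2 phi_W2 zeta_W2 zeta_orth Qpost_unit indep).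
Qed.
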